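(* Suppose $(X_A,\sigma_A)$ and $(X_B,\sigma_B)$ are continuously orbit equivalent via a homeomorphism $h:X_A\to X_B$. Let $f\in C(X_B,\mathbb Z_+)$ and $g\in C(X_A,\mathbb Z_+)$ be such that $[f]$ is an order unit of $(H^B,H^B_+)$ and $[g]$ is an order unit of $(H^A,H^A_+)$. Then there exist $l_f,k_f\in C(X_A,\mathbb Z_+)$ and $l_g,k_g\in C(X_B,\mathbb Z_+)$ such that $(l_f,k_f,0)$ and $(l_g,k_g,0)$ are suspension triplets for $(X_A,\sigma_A)$ and $(X_B,\sigma_B)$ respectively, and continuous maps $\Phi_f:S^{l_f,k_f}_A\to S^f_B$ and $\Phi_g:S^{l_g,k_g}_B\to S^g_A$ such that $\Phi_f\circ\phi_{A,t}=\phi_{B,t}\circ\Phi_f$ and $\Phi_g\circ\phi_{B,t}=\phi_{A,t}\circ\Phi_g$ for all $t\in\mathbb R_+$, and $\Phi_f([x,0])=[h(x),0]$ for all $x\in X_A$, $\Phi_g([y,0])=[h^{-1}(y),0]$ for all $y\in X_B$.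
   Context: Let $N,M>1$ and let $A$ ($N\times N$), $B$ ($M\times M$) be irreducible $\{0,1\}$-matrices which are not permutation matrices. $X_A$ is the compact space of sequences $(x_n)_{n\in\mathbb N}$ with $x_n\in\{1,\dots,N\}$, $A(x_n,x_{n+1})=1$, and $\sigma_A((x_n)_n)=(x_{n+1})_n$; similarly $(X_B,\sigma_B)$. $\mathbb Z_+$, $\mathbb R_+$ denote nonnegative integers/reals. $H^A$ is the quotient of $C(X_A,\mathbb Z)$ by $\{u-u\circ\sigma_A: u\in C(X_A,\mathbb Z)\}$, $[f]$ the class, $H^A_+=\{[f]: f\in C(X_A,\mathbb Z_+)\}$; $[f]\in H^A_+$ is an order unit if for every $[u]\in H^A$ some $n\in\mathbb N$ has $n[f]-[u]\in H^A_+$. Same for $B$. A suspension triplet for $(X_A,\sigma_A)$ is $(l,k,b)$ with $l,k\in C(X_A,\mathbb R_+)$, $b\in C(X_A,\mathbb R)$, $c=l-k$ integer-valued with $[c]$ an order unit, and $l-b$, $k-b\circ\sigma_A$ $\mathbb Z_+$-valued. $S^{l,k}_{A,b}$ is the quotient of $\{(x,r)\in X_A\times\mathbb R: r\ge b(x)\}$ by the equivalence relation generated by $(x,r)\sim(\sigma_A(x),r-c(x))$ for $r\ge l(x)$, with classes $[x,r]$ and flow $\phi_{A,t}([x,r])=[x,r+t]$ ($t\in\mathbb R_+$). Notation: $S^{l,k}_A:=S^{l,k}_{A,0}$ and $S^{l}_A:=S^{l,0}_{A,0}$; similarly for $B$. Continuous orbit equivalence via $h$: $h:X_A\to X_B$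 is a homeomorphism and there are continuous $k_1,l_1:X_A\to\mathbb Z_+$, $k_2,l_2:X_B\to\mathbb Z_+$ with $\sigma_B^{k_1(x)}(h(\sigma_A(x)))=\sigma_B^{l_1(x)}(h(x))$ for all $x\in X_A$ and $\sigma_A^{k_2(y)}(h^{-1}(\sigma_B(y)))=\sigma_A^{l_2(y)}(h^{-1}(y))$ for all $y\in X_B$. *)

From HB Require Import structures.
From mathcomp Require Import all_boot all_order all_fingroup all_algebra.
From mathcomp Require Import reals.
From Stdlib Require Import Relation_Operators.
Set Implicit Arguments. Unset Strict Implicit. Unset Printing Implicit Defensive.
Import Order.TTheory GRing.Theory Num.Theory.
Local Open Scope ring_scope.

(* Alphabet {1,..,N} is represented by 'I_N = {0,..,N-1}. *)
Definition sq (N : nat) := nat -> 'I_N.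

Definition zero_one_mx (N : nat) (A : 'M[int]_N) : Prop :=
  forall i j, A i j = 0 \/ A i j = 1.

Definition irreducible_mx (N : nat) (A : 'M[int]_N) : Prop :=
  forall i j, exists n : nat, (0 < n)%N /\ 0 < (A ^+ n) i j.

Definition is_perm_matrix (N : nat) (A : 'M[int]_N) : Prop :=
  exists s : 'S_N, A = perm_mx s.

Definition inX (N : nat) (A : 'M[int]_N) (x : sq N) : Prop :=
  forall n, A (x n) (x n.+1) = 1.

Definition shift (N : nat) (x : sq N) : sq N := fun n => x n.+1.

(* agreement on the first m coordinates (cylinder neighbourhoods) *)
Definition agree (N : nat) (m : nat) (x y : sq N) : Prop :=
  forall i, (i < m)%N -> x i = y i.

(* continuity of a map into a discrete space (Z, Z_+, ...) on X_A *)
Definition loc_const (N : nat) (A : 'M[int]_N) (T : Type) (f : sq N -> T) : Prop :=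
  forall x, inX A x -> exists m, forall y, inX A y -> agree m y x -> f y = f x.

Definition contR (R : realType) (N : nat) (A : 'M[int]_N) (f : sq N -> R) : Prop :=
  forall x, inX A x -> forall e : R, 0 < e ->
    exists m, forall y, inX A y -> agree m y x -> `|f y - f x| < e.

Definition cont_map (N M : nat) (A : 'M[int]_N) (h : sq N -> sq M) : Prop :=
  forall x, inX A x -> forall m, exists n, forall y, inX A y -> agree n y x ->
    agree m (h y) (h x).

(* [f] in H^A is an order unit: for every u in C(X_A,Z) some n in N has
   n[f] - [u] in H^A_+, i.e. n f - u = v + (w - w o sigma_A) on X_A
   for some v in C(X_A,Z_+) and w in C(X_A,Z). *)
Definition order_unit (N : nat) (A : 'M[int]_N) (f : sq N -> int) : Prop :=
  forall u : sq N -> int, loc_const A u ->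
    exists n : nat, exists v w : sq N -> int,
      [/\ loc_const A v, loc_const A w,
          (forall x, inX A x -> 0 <= v x) &
          (forall x, inX A x -> f x *+ n - u x = v x + (w x - w (shift x)))].

Definition susp_triplet (R : realType) (N : nat) (A : 'M[int]_N)
    (l k b : sq N -> R) : Prop :=
  [/\ contR A l /\ contR A k /\ contR A b,
      (forall x, inX A x -> 0 <= l x /\ 0 <= k x),
      (exists c : sq N -> int, [/\ loc_const A c,
          (forall x, inX A x -> (c x)%:~R = l x - k x) & order_unit A c]) &
      (forall x, inX A x ->
         (exists z : nat, l x - b x = z%:R) /\
         (exists z : nat, k x - b (shift x) = z%:R))].

(* representatives: pairs (x,r) with x in X_A, r >= b(x) *)
Definition pt (R : realType) (N : nat) := (sq N * R)%type.

Definition inD (R : realType) (N : nat) (A : 'M[int]_N) (b : sq N -> R)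
    (p : pt R N) : Prop := inX A p.1 /\ b p.1 <= p.2.

Definition step (R : realType) (N : nat) (A : 'M[int]_N) (l k b : sq N -> R)
    (p q : pt R N) : Prop :=
  [/\ inD A b p, l p.1 <= p.2 & q = (shift p.1, p.2 - (l p.1 - k p.1))].

(* the equivalence relation generated by step; classes are the points [x,r] *)
Definition susp_eq (R : realType) (N : nat) (A : 'M[int]_N) (l k b : sq N -> R) :
  pt R N -> pt R N -> Prop := clos_refl_sym_trans _ (step A l k b).

(* relatively open subsets of the domain D (product topology of X_A x R) *)
Definition open_in_D (R : realType) (N : nat) (A : 'M[int]_N) (b : sq N -> R)
    (U : pt R N -> Prop) : Prop :=
  forall p, inD A b p -> U p -> exists m, exists2 e : R, 0 < e &
    forall q, inD A b q -> agree m q.1 p.1 -> `|q.2 - p.2| < e -> U q.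

Definition saturated (R : realType) (N : nat) (A : 'M[int]_N) (l k b : sq N -> R)
    (U : pt R N -> Prop) : Prop :=
  forall p q, inD A b p -> inD A b q -> susp_eq A l k b p q -> U p -> U q.

(* A map Phi : S^{l,k}_{A,b} -> S^{l',k'}_{B,b'} presented on representatives by
   Psi (Phi [p] = [Psi p]).  Phi is continuous for the quotient topologies iff
   preimages under Psi of saturated open sets of D_B are open in D_A. *)
Definition flow_map (R : realType) (N M : nat) (A : 'M[int]_N) (B : 'M[int]_M)
    (l k b : sq N -> R) (l' k' b' : sq M -> R) (hb : sq N -> sq M)
    (Psi : pt R N -> pt R M) : Prop :=
  [/\ (forall p, inD A b p -> inD B b' (Psi p)),
      (forall p q, inD A b p -> inD A b q -> susp_eq A l k b p q ->
          susp_eq B l' k' b' (Psi p) (Psi q)),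
      (forall U : pt R M -> Prop, open_in_D B b' U -> saturated B l' k' b' U ->
          open_in_D A b (fun p => U (Psi p))),
      (forall p (t : R), inD A b p -> 0 <= t ->
          susp_eq B l' k' b' (Psi (p.1, p.2 + t)) ((Psi p).1, (Psi p).2 + t)) &
      (forall x, inX A x -> susp_eq B l' k' b' (Psi (x, 0)) (hb x, 0))].

Definition coe (N M : nat) (A : 'M[int]_N) (B : 'M[int]_M)
    (h : sq N -> sq M) (hinv : sq M -> sq N) : Prop :=
  [/\ (forall x, inX A x -> inX B (h x)) /\
      (forall y, inX B y -> inX A (hinv y)),
      (forall x, inX A x -> hinv (h x) = x),
      (forall y, inX B y -> h (hinv y) = y) /\
      cont_map A h /\ cont_map B hinv,
      (exists k1 l1 : sq N -> nat, loc_const A k1 /\ loc_const A l1 /\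
         forall x, inX A x ->
           iter (k1 x) (@shift M) (h (shift x)) = iter (l1 x) (@shift M) (h x)) &
      (exists k2 l2 : sq M -> nat, loc_const B k2 /\ loc_const B l2 /\
         forall y, inX B y ->
           iter (k2 y) (@shift N) (hinv (shift y)) = iter (l2 y) (@shift N) (hinv y))].

From HB Require Import structures.
From mathcomp Require Import all_boot all_order all_fingroup all_algebra.
From mathcomp Require Import reals.
From mathcomp Require Import zify ring lra.
From Stdlib Require Import Relation_Operators ClassicalEpsilon Classical FunctionalExtensionality.
Import Order.TTheory GRing.Theory Num.Theory.
Set Implicit Arguments. Unset Strict Implicit. Unset Printing Implicit Defensive.
Local Open Scope ring_scope.

(** Continuous orbit equivalence gives the cocycle identity
    [sigma^(k1 x) (h (sigma x)) = sigma^(l1 x) (h x)].  Pulling the roof [f] back along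
    it gives the integer functions [lf x = sum_(i < l1 x) f (sigma^i (h x))] and
    [kf x = sum_(i < k1 x) f (sigma^i (h (sigma x)))], and then [(x, r) |-> (h x, r)]
    respects the identifications of the two suspensions: both [(x, r)] and its image
    [(sigma x, r - (lf x - kf x))] flow down to [(sigma^(l1 x) (h x), r - lf x)].
    The real work is that [c = lf - kf] is again an order unit.  For this it suffices
    that some Birkhoff sum of [c] is >= 1 everywhere, and cutting orbit segments into
    loops with the pigeonhole principle reduces that to positivity of [c] along periodic
    orbits.  Over a period [p] of [w] the sum of [c] is the [f]-sum along the net drift
    [sum l1 - sum k1] of the periodic point [h w], which is positive since [[f]] is an
    order unit, once the drift is positive.  Were it not, points close to [w] would
    shadow [w] forever under [sigma^p], impossible as [X_A] has no isolated points
    ([A] is irreducible and not a permutation matrix). *)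

Section ShiftSpace.
Variables (N : nat) (A : 'M[int]_N).

Lemma iter_shiftE i (x : sq N) t : iter i (@shift N) x t = x (i + t)%N.
Proof. by elim: i t => [|i IH] t //=; rewrite /shift IH addSnnS. Qed.

Lemma iter_shiftC a b (x : sq N) :
  iter a (@shift N) (iter b (@shift N) x) = iter b (@shift N) (iter a (@shift N) x).
Proof. by rewrite -!iterD addnC. Qed.

Lemma iter_shift_periodic p j (w : sq N) :
  iter p (@shift N) w = w -> iter (j * p) (@shift N) w = w.
Proof. by move=> Hp; elim: j => [|j IH] //; rewrite mulSn iterD IH Hp. Qed.

Lemma inX_shift x : inX A x -> inX A (shift x).
Proof. by move=> Hx n; apply: Hx. Qed.

Lemma inX_iter i x : inX A x -> inX A (iter i (@shift N) x).
Proof. by elim: i => [|i IH] //= Hx; apply/inX_shift/IH. Qed.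

Lemma agree_le m n (x y : sq N) : (n <= m)%N -> agree m x y -> agree n x y.
Proof. by move=> Hnm H i Hi; apply: H; apply: leq_trans Hnm. Qed.

Lemma agree_sym m (x y : sq N) : agree m x y -> agree m y x.
Proof. by move=> H i Hi; rewrite H. Qed.

Lemma agree_trans m (x y z : sq N) : agree m x y -> agree m y z -> agree m x z.
Proof. by move=> H1 H2 i Hi; rewrite H1 // H2. Qed.

Lemma agree_iter i m (x y : sq N) : agree (i + m) x y ->
  agree m (iter i (@shift N) x) (iter i (@shift N) y).
Proof. by move=> H t Ht; rewrite !iter_shiftE; apply: H; lia. Qed.

Lemma loc_const_cst T (c : T) : loc_const A (fun _ => c).
Proof. by move=> x _; exists 0%N. Qed.

Lemma loc_const_op2 T1 T2 T3 (op : T1 -> T2 -> T3) u v :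
  loc_const A u -> loc_const A v -> loc_const A (fun x => op (u x) (v x)).
Proof.
move=> Hu Hv x Hx; case: (Hu x Hx) => m1 H1; case: (Hv x Hx) => m2 H2.
by exists (maxn m1 m2) => y Hy Ha; rewrite H1 ?H2 //; apply: agree_le Ha; lia.
Qed.

Lemma loc_const_iter T (u : sq N -> T) i : loc_const A u ->
  loc_const A (fun x => u (iter i (@shift N) x)).
Proof.
move=> Hu x Hx; case: (Hu _ (inX_iter i Hx)) => m H.
exists (i + m)%N => y Hy Ha; apply: H; [exact: inX_iter | exact: agree_iter].
Qed.

Lemma loc_const_ext T (u v : sq N -> T) : u =1 v -> loc_const A u -> loc_const A v.
Proof. by move=> Huv Hu x Hx; case: (Hu x Hx) => m Hm; exists m => y Hy Ha; rewrite -!Huv Hm. Qed.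

Lemma loc_const_big T (op : T -> T -> T) idx (F : nat -> sq N -> T) n :
  (forall i, loc_const A (F i)) -> loc_const A (fun x => \big[op/idx]_(i < n) F i x).
Proof.
elim: n F => [|n IH] F HF.
  by apply: loc_const_ext (loc_const_cst idx) => x; rewrite big_ord0.
apply: loc_const_ext (loc_const_op2 op (HF 0%N) (IH (fun i => F i.+1) _)) => // x.
by rewrite big_ord_recl.
Qed.

Lemma loc_const_big_var T (op : T -> T -> T) idx (F : nat -> sq N -> T) (n : sq N -> nat) :
  (forall i, loc_const A (F i)) -> loc_const A n ->
  loc_const A (fun x => \big[op/idx]_(i < n x) F i x).
Proof.
move=> HF Hn x Hx.
case: (loc_const_big op idx (n x) HF Hx) => m1 H1; case: (Hn x Hx) => m2 H2.
exists (maxn m1 m2) => y Hy Ha.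
by rewrite (H2 y Hy) ?(H1 y Hy) //; apply: agree_le Ha; lia.
Qed.

End ShiftSpace.

Lemma loc_const_comp N M (A : 'M[int]_N) (B : 'M[int]_M) (h : sq N -> sq M) T (u : sq M -> T) :
  cont_map A h -> (forall x, inX A x -> inX B (h x)) -> loc_const B u ->
  loc_const A (fun x => u (h x)).
Proof.
move=> Hc Hh Hu x Hx; case: (Hu _ (Hh x Hx)) => m H.
by case: (Hc x Hx m) => n Hn; exists n => y Hy Ha; apply: H; [exact: Hh | exact: Hn].
Qed.

Section Birkhoff.
Variables (V : nmodType) (N : nat).
Implicit Types (f : sq N -> V) (y : sq N).

Definition birkhoff f n y : V := \sum_(i < n) f (iter i (@shift N) y).

Lemma birkhoff0 f y : birkhoff f 0 y = 0.
Proof. by rewrite /birkhoff big_ord0. Qed.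

Lemma birkhoffS f n y : birkhoff f n.+1 y = birkhoff f n y + f (iter n (@shift N) y).
Proof. by rewrite /birkhoff big_ord_recr. Qed.

Lemma birkhoffD f a b y :
  birkhoff f (a + b) y = birkhoff f a y + birkhoff f b (iter a (@shift N) y).
Proof.
rewrite /birkhoff big_split_ord; congr (_ + _).
by apply: eq_bigr => i _; rewrite -iterD [(i + a)%N]addnC.
Qed.

Lemma birkhoff_addf (f1 f2 : sq N -> V) n y :
  birkhoff (fun z => f1 z + f2 z) n y = birkhoff f1 n y + birkhoff f2 n y.
Proof. by rewrite /birkhoff big_split. Qed.

Lemma loc_const_birkhoff (A : 'M[int]_N) f n : loc_const A f -> loc_const A (birkhoff f n).
Proof.
by move=> Hf; apply: (loc_const_big _ _ (F := fun i x => f (iter i _ x))) => i; apply: loc_const_iter.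
Qed.

End Birkhoff.

Lemma birkhoffnS N (f : sq N -> nat) n y :
  birkhoff f n.+1 y = (birkhoff f n y + f (iter n (@shift N) y))%N.
Proof. exact: birkhoffS. Qed.

Lemma fin_ex_bound (T : finType) (P : T -> nat -> Prop) :
  (forall t n n', (n <= n')%N -> P t n -> P t n') -> (forall t, exists n, P t n) ->
  exists n, forall t, P t n.
Proof.
move=> Hmono Hex.
suff [n Hn]: exists n, forall t, t \in enum T -> P t n.
  by exists n => t; apply: Hn; rewrite mem_enum.
elim: (enum T) => [|a l [n IH]]; first by exists 0%N.
case: (Hex a) => na Ha; exists (maxn n na) => t; rewrite inE; case/orP.
  by move/eqP ->; apply: Hmono Ha; exact: leq_maxr.
by move=> Ht; apply: Hmono (IH t Ht); exact: leq_maxl.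
Qed.

Section Compactness.
Variables (N : nat) (A : 'M[int]_N) (T : Type) (u : sq N -> T).

Definition oscillates_at n s m := exists x y,
  [/\ inX A x /\ inX A y, agree n x s /\ agree n y s, agree m x y & u x <> u y].

Lemma oscillates_at_le n s m m' : (m <= m')%N -> oscillates_at n s m' -> oscillates_at n s m.
Proof.
by move=> Hmm' [x [y [Hxy0 Hs Hxy Hu]]]; exists x, y; split=> //; apply: agree_le Hxy.
Qed.

Lemma oscillates_refine n s : (forall m, oscillates_at n s m) ->
  exists s', agree n s' s /\ forall m, oscillates_at n.+1 s' m.
Proof.
move=> Hs; apply: NNPP => Hn.
pose set_n (a : 'I_N) t := if t == n then a else s t.
have [M0 HM0] : exists M0, forall a, ~ oscillates_at n.+1 (set_n a) M0.
  apply: (fin_ex_bound (P := fun a M0 => ~ oscillates_at n.+1 (set_n a) M0)).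
    by move=> a m m' Hmm' Hno Hosc; apply/Hno/(oscillates_at_le Hmm').
  move=> a; apply: NNPP => Ha; apply: Hn; exists (set_n a); split.
    by move=> t Ht; rewrite /set_n (ltn_eqF Ht).
  by move=> m; apply: NNPP => Hm; apply: Ha; exists m.
case: (Hs (maxn M0 n.+1)) => x [y [Hxy0 [Hxs Hys] Hxy Hu]].
have Hyx : y n = x n by symmetry; apply: Hxy; lia.
apply: (HM0 (x n)); exists x, y; split => //; first split.
- by move=> t Ht; rewrite /set_n; case: eqP => [->|Htn] //; apply: Hxs; lia.
- by move=> t Ht; rewrite /set_n; case: eqP => [->|Htn] //; apply: Hys; lia.
- by apply: agree_le Hxy; lia.
Qed.

Lemma loc_const_uniform : loc_const A u ->
  exists m, forall x y, inX A x -> inX A y -> agree m x y -> u x = u y.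
Proof.
move=> Hu; apply: NNPP => Hne.
have Hosc m : exists x y, [/\ inX A x /\ inX A y, agree m x y & u x <> u y].
  apply: NNPP => Hn; apply: Hne; exists m => x y Hx Hy Ha.
  by apply: NNPP => Hneq; apply: Hn; exists x, y.
have [s0 _] := Hosc 0%N.
have Hosc0 m : oscillates_at 0 s0 m.
  by case: (Hosc m) => x [y [Hxy Hxy' Hu']]; exists x, y; split.
(* König's lemma: by dependent choice, nested cylinders on which [u] keeps oscillating;
   at their limit point [u] cannot be locally constant. *)
pose next n s := epsilon (inhabits s)
  (fun s' => agree n s' s /\ forall m, oscillates_at n.+1 s' m).
pose S := fix S n := if n is n'.+1 then next n' (S n') else s0.
have HS n : agree n (S n.+1) (S n) /\ forall m, oscillates_at n.+1 (S n.+1) m.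
  elim: n => [|n [_ IH]]; first exact: (epsilon_spec _ _ (oscillates_refine Hosc0)).
  exact: (epsilon_spec _ _ (oscillates_refine IH)).
have HSa n k : agree n (S (n + k)%N) (S n).
  elim: k => [|k IH]; first by rewrite addn0.
  by rewrite addnS; apply: agree_trans IH; apply: (agree_le (leq_addr k n)); case: (HS (n + k)%N).
pose x t := S t.+1 t.
have Hxa n : agree n x (S n).
  move=> t Ht; rewrite /x; have -> : n = (t.+1 + (n - t.+1))%N by lia.
  by symmetry; apply: HSa.
have Hx : inX A x.
  move=> t; case: ((HS t.+1).2 0%N) => z [_ [[Hz _] [Hzs _] _ _]].
  by rewrite (Hxa t.+2 t) // (Hxa t.+2 t.+1) // -(Hzs t) // -(Hzs t.+1).
case: (Hu x Hx) => m0 Hm0.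
case: ((HS m0).2 0%N) => y [z [[Hy Hz] [Hys Hzs] _ Hneq]].
have Hyx : agree m0 y x by apply: agree_le (agree_trans Hys (agree_sym (Hxa m0.+1))).
have Hzx : agree m0 z x by apply: agree_le (agree_trans Hzs (agree_sym (Hxa m0.+1))).
by apply: Hneq; rewrite (Hm0 y) ?(Hm0 z).
Qed.

End Compactness.

Section Windows.
Variables (N : nat) (A : 'M[int]_N).

Definition window m (x : sq N) : {ffun 'I_m -> 'I_N} := [ffun i : 'I_m => x i].

Lemma window_agree m (x y : sq N) : window m x = window m y -> agree m x y.
Proof.
by move=> H t Ht; have := congr1 (fun w : {ffun 'I_m -> 'I_N} => w (Ordinal Ht)) H; rewrite !ffunE.
Qed.

Lemma loc_const_bounded (u : sq N -> int) : loc_const A u ->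
  exists E : nat, forall x, inX A x -> (`|u x| <= E)%N.
Proof.
move=> Hu; case: (loc_const_uniform Hu) => m Hm.
have [E HE] : exists E, forall w x, inX A x -> window m x = w -> (`|u x| <= E)%N.
  apply: fin_ex_bound => [w n n' Hle H x Hx Hw|w]; first exact: leq_trans (H x Hx Hw) Hle.
  case: (classic (exists x0, inX A x0 /\ window m x0 = w)) => [[x0 [Hx0 Hw0]]|Hn].
    exists `|u x0|%N => x Hx Hw.
    by rewrite (Hm x x0) //; apply: window_agree; rewrite Hw Hw0.
  by exists 0%N => x Hx Hw; exfalso; apply: Hn; exists x.
by exists E => x Hx; apply: (HE (window m x)).
Qed.

Lemma window_pigeonhole m (x : sq N) : exists i j, (i < j <= #|{ffun 'I_m -> 'I_N}|)%N /\
  agree m (iter i (@shift N) x) (iter j (@shift N) x).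
Proof.
set W := #|{ffun 'I_m -> 'I_N}|.
pose F (i : 'I_W.+1) := window m (iter i (@shift N) x).
have [i0 [j0 [Hij Hne]]] : exists i0 j0, F i0 = F j0 /\ i0 <> j0.
  apply: NNPP => Hn; have /leq_card : injective F.
    by move=> i0 j0 Heq; apply: NNPP => Hne; apply: Hn; exists i0, j0.
  by rewrite card_ord ltnn.
have Hi0 := ltn_ord i0; have Hj0 := ltn_ord j0.
case: (ltngtP i0 j0) => Hlt.
- by exists i0, j0; split; [rewrite Hlt /=; lia | exact: window_agree].
- by exists j0, i0; split; [rewrite Hlt /=; lia | exact: window_agree].
- by case: Hne; apply: val_inj.
Qed.

End Windows.

Section LoopExcision.
Variables (N : nat) (A : 'M[int]_N) (x : sq N) (i d m : nat).
Hypotheses (Hx : inX A x) (Hd : (0 < d)%N) (Hm : (0 < m)%N).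
Hypothesis Hloop : forall r, (r < m)%N -> x (i + d + r)%N = x (i + r)%N.

Lemma loop_periodic r : (r < d + m)%N -> x (i + r)%N = x (i + r %% d)%N.
Proof.
elim/ltn_ind: r => r IH Hr.
case: (ltnP r d) => Hrd; first by rewrite modn_small.
have -> : r = (d + (r - d))%N by lia.
rewrite addnA Hloop; last lia.
by rewrite modnDl IH //; lia.
Qed.

Definition loop_point : sq N := fun t => x (i + t %% d)%N.
Definition excise_loop : sq N := fun t => if (t < i)%N then x t else x (t + d)%N.

Lemma loop_point_inX : inX A loop_point.
Proof.
move=> t; rewrite /loop_point -addn1 -modnDml addn1.
have Hr : (t %% d < d)%N by rewrite ltn_mod.
case: (ltnP (t %% d).+1 d) => H.
  by rewrite (modn_small H) addnS; apply: Hx.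
have Heq : (t %% d).+1 = d by lia.
rewrite Heq modnn addn0.
have -> : x i = x (i + d)%N by rewrite (loop_periodic (r := d)) ?modnn ?addn0 //; lia.
by have := Hx (i + t %% d)%N; rewrite -addnS Heq.
Qed.

Lemma loop_point_periodic : iter d (@shift N) loop_point = loop_point.
Proof. by apply: functional_extensionality => t; rewrite iter_shiftE /loop_point modnDl. Qed.

Lemma excise_loop_inX : inX A excise_loop.
Proof.
move=> t; rewrite /excise_loop.
case: (ltnP t.+1 i) => H1; first by rewrite (ltnW H1); apply: Hx.
case: (ltnP t i) => H2; last by rewrite /= addSn; apply: Hx.
have Ht : t.+1 = i by lia.
by rewrite Ht; have := Hloop Hm; rewrite !addn0 => ->; rewrite -Ht; exact: Hx.
Qed.

Variable e : sq N -> int.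
Hypothesis He : forall y z, inX A y -> inX A z -> agree m y z -> e y = e z.

Lemma birkhoff_excise_loop K : (i + d <= K)%N ->
  birkhoff e K x = birkhoff e (K - d) excise_loop + birkhoff e d loop_point.
Proof.
move=> HK.
have -> : K = (i + (d + (K - i - d)))%N by lia.
have -> : (i + (d + (K - i - d)) - d = i + (K - i - d))%N by lia.
have Hexc : iter i (@shift N) excise_loop = iter (i + d) (@shift N) x.
  apply: functional_extensionality => s; rewrite !iter_shiftE /excise_loop.
  by rewrite ltnNge leq_addr /=; congr x; lia.
rewrite !birkhoffD Hexc iter_shiftC -iterD.
have -> : birkhoff e i excise_loop = birkhoff e i x.
  apply: eq_bigr => -[t Ht] _ /=; apply: He; [exact/inX_iter/excise_loop_inX | exact: inX_iter|].
  move=> s Hs; rewrite !iter_shiftE /excise_loop.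
  case: ifP => // /negbT; rewrite -leqNgt => Hle.
  have -> : (t + s + d = i + d + (t + s - i))%N by lia.
  by rewrite Hloop; [congr x | ]; lia.
have -> : birkhoff e d loop_point = birkhoff e d (iter i (@shift N) x).
  apply: eq_bigr => -[t Ht] _ /=; apply: He; [exact/inX_iter/loop_point_inX | exact/inX_iter/inX_iter|].
  by move=> s Hs; rewrite !iter_shiftE /loop_point -loop_periodic //; lia.
ring.
Qed.

End LoopExcision.

Section BirkhoffPositivity.
Variables (N : nat) (A : 'M[int]_N) (e : sq N -> int).

Lemma birkhoff_ge_lbound (E : int) K y : inX A y -> (forall z, inX A z -> E <= e z) ->
  E * K%:Z <= birkhoff e K y.
Proof.
move=> Hy HE; elim: K => [|K IH]; first by rewrite birkhoff0 mulr0.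
by rewrite birkhoffS; have := HE _ (inX_iter K Hy); move: IH; lia.
Qed.

Lemma birkhoff_ge1_of_periodic m (E : nat) :
  (0 < m)%N ->
  (forall y z, inX A y -> inX A z -> agree m y z -> e y = e z) ->
  (forall y, inX A y -> - (E%:Z) <= e y) ->
  (forall w p, inX A w -> (0 < p)%N -> iter p (@shift N) w = w -> 1 <= birkhoff e p w) ->
  exists K, forall y, inX A y -> 1 <= birkhoff e K y.
Proof.
move=> Hm He HE Hper.
set W := #|{ffun 'I_m -> 'I_N}|.
set C : int := W%:Z + W%:Z * W%:Z * E%:Z.
(* An orbit segment longer than [W] contains a loop of length at most [W]; its sum is
   that of a periodic orbit, hence >= 1, and excising it yields the induction. *)
suff Hmain K y : inX A y -> K%:Z - C <= W%:Z * birkhoff e K y.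
  by exists (`|C|%N + 1)%N => y Hy; have := Hmain (`|C|%N + 1)%N y Hy; lia.
elim/ltn_ind: K y => K IH y Hy.
case: (leqP K W) => HKW.
  have Hb := birkhoff_ge_lbound K Hy HE.
  have HWb := ler_wpM2l (isT : 0 <= W%:Z) Hb.
  have HWE : (W%:Z * E%:Z) * K%:Z <= (W%:Z * E%:Z) * W%:Z.
    by apply: ler_wpM2l; [exact: mulr_ge0 | rewrite lez_nat].
  have HKW' : K%:Z <= W%:Z by rewrite lez_nat.
  by move: HWb HWE HKW'; rewrite /C; lia.
case: (window_pigeonhole m y) => i [j [Hij Ha]].
set d := (j - i)%N.
have Hd : (0 < d)%N by rewrite /d; lia.
have Hloop r : (r < m)%N -> y (i + d + r)%N = y (i + r)%N.
  by move=> Hr; have := Ha r Hr; rewrite !iter_shiftE => ->; congr y; rewrite /d; lia.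
rewrite (birkhoff_excise_loop Hy Hd Hm Hloop He); last by rewrite /d; lia.
have H1 := IH (K - d)%N ltac:(rewrite /d; lia) _ (excise_loop_inX Hy Hd Hm Hloop).
have H2 := Hper _ _ (loop_point_inX Hy Hd Hm Hloop) Hd (loop_point_periodic y i d).
have : W%:Z * 1 <= W%:Z * birkhoff e d (loop_point y i d) by apply: ler_wpM2l.
have HdW : (d <= W)%N by rewrite /d; lia.
by move: H1; rewrite -subzn; [move: HdW; lia | lia].
Qed.

End BirkhoffPositivity.

Section OrderUnits.
Variables (N : nat) (A : 'M[int]_N).
Implicit Types (e : sq N -> int).

Lemma birkhoff_ge0 e n y : inX A y -> (forall z, inX A z -> 0 <= e z) -> 0 <= birkhoff e n y.
Proof. by move=> Hy He; apply: sumr_ge0 => i _; apply/He/inX_iter. Qed.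

Lemma birkhoff_sub_shift e i x :
  birkhoff e i x - birkhoff e i (shift x) = e x - e (iter i (@shift N) x).
Proof.
have H1 := birkhoffS e i x; have H2 := birkhoffD e 1 i x.
by rewrite add1n (birkhoffS e 0) birkhoff0 add0r /= in H2; lia.
Qed.

Lemma birkhoff_coboundary (w : sq N -> int) q z :
  birkhoff (fun y => w y - w (shift y)) q z = w z - w (iter q (@shift N) z).
Proof. by elim: q => [|q IH]; rewrite ?birkhoff0 ?subrr // birkhoffS IH /=; lia. Qed.

Lemma sum_birkhoff_sub_shift e K x :
  \sum_(i < K) birkhoff e i x - \sum_(i < K) birkhoff e i (shift x) = e x *+ K - birkhoff e K x.
Proof.
elim: K => [|K IH]; first by rewrite !big_ord0 birkhoff0 subrr.
rewrite !big_ord_recr /= birkhoffS mulrS.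
have := birkhoff_sub_shift e K x; move: IH.
by set a := \sum_(i < K) _; set b := \sum_(i < K) _; set c := e x *+ K; lia.
Qed.

Lemma order_unit_of_birkhoff_ge1 e : loc_const A e ->
  (exists K, forall x, inX A x -> 1 <= birkhoff e K x) -> order_unit A e.
Proof.
move=> He [K HK] u Hu.
case: (loc_const_bounded Hu) => U HU.
(* [e *+ (U * K) - u] differs by a coboundary from [U * birkhoff e K - u >= U - |u| >= 0]. *)
exists (U * K)%N, (fun x => U%:Z * birkhoff e K x - u x),
  (fun x => U%:Z * \sum_(i < K) birkhoff e i x); split.
- apply: (loc_const_op2 (fun a b => a - b) _ Hu).
  exact: (loc_const_op2 *%R (loc_const_cst U%:Z) (loc_const_birkhoff K He)).
- apply: (loc_const_op2 *%R (loc_const_cst U%:Z)).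
  by apply: (loc_const_big _ _ (F := fun i => birkhoff e i)) => i; apply: loc_const_birkhoff.
- move=> x Hx; have Hux : u x <= U%:Z.
    by apply: le_trans (ler_norm (u x)) _; rewrite -abszE lez_nat; apply: HU.
  have : U%:Z * 1 <= U%:Z * birkhoff e K x by apply: ler_wpM2l => //; apply: HK.
  by move: Hux; lia.
- move=> x Hx; rewrite -mulrBr sum_birkhoff_sub_shift.
  by rewrite mulnC mulrnA -mulr_natl natz mulrBr; lia.
Qed.

Lemma order_unit_periodic_ge1 f : order_unit A f ->
  forall z q, inX A z -> (0 < q)%N -> iter q (@shift N) z = z -> 1 <= birkhoff f q z.
Proof.
move=> Hfu z q Hz Hq Hper.
case: (Hfu (fun _ => 1) (loc_const_cst (1 : int))) => n [v [w [_ _ Hv Heq]]].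
have Hsum : birkhoff (fun y => f y *+ n - 1) q z =
    birkhoff v q z + birkhoff (fun y => w y - w (shift y)) q z.
  rewrite -birkhoff_addf; apply: eq_bigr => i _; apply/Heq/inX_iter/Hz.
rewrite birkhoff_coboundary Hper subrr addr0 in Hsum.
have Hfq : birkhoff (fun y => f y *+ n - 1) q z = birkhoff f q z *+ n - q%:Z.
  by elim: (q) => [|k IHk]; rewrite ?birkhoff0 ?mul0rn ?subr0 // !birkhoffS IHk mulrnDl; lia.
have Hv0 := birkhoff_ge0 q Hz Hv.
have : q%:Z <= birkhoff f q z *+ n by move: Hv0; rewrite -Hsum Hfq; lia.
rewrite -mulr_natr natz.
case: (lerP (birkhoff f q z) 0) => // Hle.
have : birkhoff f q z * n%:Z <= 0 by apply: mulr_le0_ge0.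
by move: Hq; lia.
Qed.

End OrderUnits.

Section NoIsolatedPoints.
Variables (N : nat) (A : 'M[int]_N).
Hypotheses (HA01 : zero_one_mx A) (HAirr : irreducible_mx A) (HAperm : ~ is_perm_matrix A).

Lemma path_of_mx_pow_gt0 k i j : 0 < (A ^+ k) i j ->
  exists pi : nat -> 'I_N, [/\ pi 0%N = i, pi k = j &
    forall t, (t < k)%N -> A (pi t) (pi t.+1) = 1].
Proof.
elim: k i j => [|k IH] i j.
  by rewrite expr0 mxE; case: eqP => [->|]; [exists (fun _ => j) | rewrite ltxx].
rewrite exprS -mulmxE mxE => Hpos.
have [l Hl] : exists l, 0 < A i l * (A ^+ k) l j.
  apply: NNPP => Hn; move: Hpos; rewrite ltNge => /negP; apply.
  by apply: sumr_le0 => l _; rewrite leNgt; apply/negP => Hl; apply: Hn; exists l.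
have HAil : A i l = 1 by case: (HA01 i l) => // H0; rewrite H0 mul0r ltxx in Hl.
rewrite HAil mul1r in Hl; case: (IH _ _ Hl) => pi [H0 Hk Hp].
exists (fun t => if t is t'.+1 then pi t' else i); split => // -[|t] Ht /=; first by rewrite H0.
by apply: Hp; lia.
Qed.

Definition succ (i : 'I_N) : 'I_N := epsilon (inhabits i) (fun j => A i j = 1).

Lemma succP i : A i (succ i) = 1.
Proof.
apply: (epsilon_spec (inhabits i) (fun j => A i j = 1)); case: (HAirr i i) => k [Hk Hpos].
by case: (path_of_mx_pow_gt0 Hpos) => pi [H0 _ Hp]; exists (pi 1%N); rewrite -H0; apply: Hp.
Qed.

Definition succ_ray (s : 'I_N) : sq N := fun t => iter t succ s.

Lemma succ_ray_inX s : inX A (succ_ray s).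
Proof. by move=> t; exact: succP. Qed.

Lemma exists_branching : exists i0 j1 j2, [/\ j1 <> j2, A i0 j1 = 1 & A i0 j2 = 1].
Proof.
apply: NNPP => Hn.
have Huniq i j : A i j = 1 -> j = succ i.
  by move=> Hij; apply: NNPP => Hne; apply: Hn; exists i, j, (succ i); split => //; exact: succP.
have Hsurj j : exists i, succ i = j.
  case: (HAirr j j) => k [Hk Hpos]; case: (path_of_mx_pow_gt0 Hpos) => pi [_ Hkj Hp].
  exists (pi k.-1); symmetry; apply: Huniq; rewrite -Hkj.
  by have := Hp k.-1; rewrite prednK //; apply; lia.
pose g j := epsilon (inhabits j) (fun i => succ i = j).
have Hg j : succ (g j) = j by exact: (epsilon_spec _ _ (Hsurj j)).
have Hginj : injective g by move=> j1 j2 Heq; rewrite -(Hg j1) -(Hg j2) Heq.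
have [g' Hgg' Hg'g] := inj_card_bij Hginj (leqnn _).
have Hinj : injective succ by move=> i1 i2; rewrite -{1}(Hg'g i1) -{1}(Hg'g i2) !Hg => /(can_inj Hg'g).
apply: HAperm; exists (perm Hinj); apply/matrixP => i j.
rewrite /perm_mx /row_perm !mxE permE.
case: (HA01 i j) => Hij; last by rewrite Hij -(Huniq _ _ Hij) eqxx.
by rewrite Hij; case: eqP => // Heq; rewrite -Heq succP in Hij.
Qed.

Definition splice n (u y : sq N) : sq N := fun t => if (t < n)%N then u t else y (t - n)%N.

Lemma splice_inX n u y : inX A y -> (forall t, (t.+1 < n)%N -> A (u t) (u t.+1) = 1) ->
  ((0 < n)%N -> A (u n.-1) (y 0%N) = 1) -> inX A (splice n u y).
Proof.
move=> Hy Hu Hn t; rewrite /splice.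
case: (ltnP t.+1 n) => H1; first by rewrite (ltnW H1); exact: Hu.
case: (ltnP t n) => H2.
  have Ht : t.+1 = n by lia.
  rewrite Ht subnn; have -> : t = n.-1 by lia.
  by apply: Hn; lia.
by have -> : (t.+1 - n = (t - n).+1)%N by lia.
Qed.

Lemma two_points_from s : exists y1 y2,
  [/\ inX A y1 /\ inX A y2, y1 0%N = s /\ y2 0%N = s & y1 <> y2].
Proof.
case: exists_branching => i0 [j1 [j2 [Hne H1 H2]]].
case: (HAirr s i0) => k [Hk Hpos]; case: (path_of_mx_pow_gt0 Hpos) => pi [H0 Hki Hp].
have Hsp j : A i0 j = 1 -> inX A (splice k.+1 pi (succ_ray j)).
  move=> Hj; apply: splice_inX; first exact: succ_ray_inX.
    by move=> t Ht; apply: Hp; lia.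
  by move=> _ /=; rewrite Hki.
exists (splice k.+1 pi (succ_ray j1)), (splice k.+1 pi (succ_ray j2)).
split; [by split; apply: Hsp | by rewrite /splice /= H0 |].
by move=> Heq; have := congr1 (fun y => y k.+1) Heq; rewrite /splice ltnn subnn.
Qed.

Lemma inX_not_isolated w n : inX A w -> exists x, [/\ inX A x, agree n x w & x <> w].
Proof.
move=> Hw; case: (two_points_from (w n)) => y1 [y2 [[Hy1 Hy2] [H1 H2] Hne]].
have Hsp y : inX A y -> y 0%N = w n -> inX A (splice n w y) /\ agree n (splice n w y) w.
  move=> Hy Hy0; split; last by move=> t Ht; rewrite /splice Ht.
  apply: splice_inX => [//|t _|Hn]; first exact: Hw.
  by rewrite Hy0; have := Hw n.-1; rewrite prednK.
case: (Hsp y1 Hy1 H1) => Hx1 Ha1; case: (Hsp y2 Hy2 H2) => Hx2 Ha2.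
case: (classic (splice n w y1 = w)) => Heq1; last by exists (splice n w y1).
exists (splice n w y2); split => // Heq2; apply: Hne.
apply: functional_extensionality => t.
have := congr1 (fun y => y (n + t)%N) Heq1; have := congr1 (fun y => y (n + t)%N) Heq2.
by rewrite /splice ltnNge leq_addr /= addKn => -> ->.
Qed.

End NoIsolatedPoints.

Lemma eq_of_agree_periodic N p (x w : sq N) : (0 < p)%N -> iter p (@shift N) w = w ->
  (forall j, agree p (iter (j * p) (@shift N) x) w) -> x = w.
Proof.
move=> Hp Hper Hx; apply: functional_extensionality => t.
rewrite (divn_eq t p); have Hr : (t %% p < p)%N by rewrite ltn_mod.
have := Hx (t %/ p)%N (t %% p)%N Hr; rewrite iter_shiftE => ->.
by have := congr1 (fun y => y (t %% p)%N) (iter_shift_periodic (t %/ p) Hper); rewrite iter_shiftE.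
Qed.

Section OrbitCocycle.
Variables (N M : nat) (A : 'M[int]_N) (B : 'M[int]_M).
Variables (h : sq N -> sq M) (k1 l1 : sq N -> nat).
Hypothesis hrel : forall x, inX A x ->
  iter (k1 x) (@shift M) (h (shift x)) = iter (l1 x) (@shift M) (h x).

Lemma iter_birkhoff_cocycle K x : inX A x ->
  iter (birkhoff l1 K x) (@shift M) (h x) =
  iter (birkhoff k1 K x) (@shift M) (h (iter K (@shift N) x)).
Proof.
move=> Hx; elim: K => [|K IH]; first by rewrite !birkhoff0.
rewrite !birkhoffnS [in LHS]addnC [in RHS]addnC !iterD IH iter_shiftC.
rewrite -hrel; last exact: inX_iter.
by rewrite iter_shiftC.
Qed.

Variable f : sq M -> int.

Definition roof_l x := birkhoff f (l1 x) (h x).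
Definition roof_k x := birkhoff f (k1 x) (h (shift x)).

Lemma birkhoff_roof_sub K x : inX A x ->
  birkhoff (fun z => roof_l z - roof_k z) K x =
  birkhoff f (birkhoff l1 K x) (h x) - birkhoff f (birkhoff k1 K x) (h (iter K (@shift N) x)).
Proof.
move=> Hx; elim: K => [|K IH]; first by rewrite !birkhoff0 subrr.
rewrite birkhoffS IH /roof_l /roof_k !birkhoffnS [(birkhoff k1 K x + _)%N]addnC !birkhoffD.
rewrite iter_birkhoff_cocycle // hrel; last exact: inX_iter.
have -> : iter K.+1 (@shift N) x = shift (iter K (@shift N) x) by [].
set y := h (iter K (@shift N) x); set a := birkhoff k1 K x; set l := l1 (iter K (@shift N) x).
have := birkhoffD f a l y; rewrite addnC birkhoffD; lia.
Qed.

End OrbitCocycle.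

Section TransferOrderUnit.
Variables (N M : nat) (A : 'M[int]_N) (B : 'M[int]_M).
Hypotheses (HA01 : zero_one_mx A) (HAirr : irreducible_mx A) (HAperm : ~ is_perm_matrix A).
Variables (h : sq N -> sq M) (hinv : sq M -> sq N) (k1 l1 : sq N -> nat).
Hypotheses (Hh : forall x, inX A x -> inX B (h x)) (Hhh : forall x, inX A x -> hinv (h x) = x).
Hypotheses (Hch : cont_map A h) (Hchi : cont_map B hinv).
Hypotheses (Hk1 : loc_const A k1) (Hl1 : loc_const A l1).
Hypothesis hrel : forall x, inX A x ->
  iter (k1 x) (@shift M) (h (shift x)) = iter (l1 x) (@shift M) (h x).

Section Shadowing.
Variables (w : sq N) (p : nat).
Hypotheses (Hw : inX A w) (Hper : iter p (@shift N) w = w).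
Hypothesis Hdrift : (birkhoff l1 p w <= birkhoff k1 p w)%N.

(* Since the drift is nonpositive, the [m]-window of [h x] is never shifted forward,
   so it still matches [h w] after [p] steps. *)
Lemma shadow_step : exists m, forall x, inX A x -> agree m (h x) (h w) ->
  agree p x w /\ agree m (h (iter p (@shift N) x)) (h w).
Proof.
set a := birkhoff l1 p w; set b := birkhoff k1 p w.
have Hab : iter a (@shift M) (h w) = iter b (@shift M) (h w).
  by have := iter_birkhoff_cocycle hrel p Hw; rewrite Hper.
case: (loc_const_birkhoff p Hl1 Hw) => ma Hma; case: (loc_const_birkhoff p Hk1 Hw) => mb Hmb.
case: (Hch Hw b) => n1 Hn1.
set MM := maxn (maxn ma mb) (p + n1).
case: (Hchi (Hh Hw) MM) => m Hm; rewrite Hhh // in Hm.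
exists m => x Hx Hxw.
have HxwM : agree MM x w by rewrite -(Hhh Hx); apply: Hm => //; exact: Hh.
split; first by apply: agree_le HxwM; lia.
have Hr := iter_birkhoff_cocycle hrel p Hx.
rewrite (Hma x) ?(Hmb x) // in Hr; try by apply: agree_le HxwM; lia.
have Hb : agree b (h (iter p (@shift N) x)) (h w).
  apply: Hn1; first exact: inX_iter.
  by rewrite -[X in agree _ _ X]Hper; apply: agree_iter; apply: agree_le HxwM; lia.
move=> t Ht; case: (ltnP t b) => Htb; first exact: Hb.
have Eb (y : sq M) : y t = iter b (@shift M) y (t - b)%N by rewrite iter_shiftE; congr y; lia.
by rewrite Eb [h w t]Eb -Hr -Hab !iter_shiftE; apply: Hxw; lia.
Qed.

End Shadowing.

Lemma periodic_drift_pos w p : inX A w -> (0 < p)%N -> iter p (@shift N) w = w ->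
  (birkhoff k1 p w < birkhoff l1 p w)%N.
Proof.
move=> Hw Hp Hper; rewrite ltnNge; apply/negP => Hdrift.
case: (shadow_step Hw Hper Hdrift) => m Hm.
case: (Hch Hw m) => n Hn.
case: (inX_not_isolated HA01 HAirr HAperm n Hw) => x [Hx Hxw Hne].
have Hshadow j : agree m (h (iter (j * p) (@shift N) x)) (h w).
  elim: j => [|j IH]; first exact: Hn.
  by rewrite mulSn iterD; apply: (Hm _ (inX_iter _ Hx) IH).2.
apply/Hne/(eq_of_agree_periodic Hp Hper) => j.
exact: (Hm _ (inX_iter _ Hx) (Hshadow j)).1.
Qed.

Variable f : sq M -> int.
Hypotheses (Hfc : loc_const B f) (Hfu : order_unit B f).

Lemma loc_const_roof_l : loc_const A (roof_l h l1 f).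
Proof.
apply: (loc_const_big_var _ _ (F := fun i x => f (iter i (@shift M) (h x)))) => // i.
exact: loc_const_comp Hch Hh (loc_const_iter i Hfc).
Qed.

Lemma loc_const_roof_k : loc_const A (roof_k h k1 f).
Proof.
apply: (loc_const_big_var _ _ (F := fun i x => f (iter i (@shift M) (h (shift x))))) => // i.
apply: (loc_const_iter (u := fun x => f (iter i (@shift M) (h x))) 1).
exact: loc_const_comp Hch Hh (loc_const_iter i Hfc).
Qed.

Lemma roof_sub_periodic_ge1 w p : inX A w -> (0 < p)%N -> iter p (@shift N) w = w ->
  1 <= birkhoff (fun x => roof_l h l1 f x - roof_k h k1 f x) p w.
Proof.
move=> Hw Hp Hper.
have Hdrift := periodic_drift_pos Hw Hp Hper.
rewrite (birkhoff_roof_sub hrel) // Hper.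
set a := birkhoff l1 p w in Hdrift *; set b := birkhoff k1 p w in Hdrift *.
have Hab : iter a (@shift M) (h w) = iter b (@shift M) (h w).
  by have := iter_birkhoff_cocycle hrel p Hw; rewrite Hper.
have -> : a = (b + (a - b))%N by lia.
rewrite birkhoffD addrC addKr.
apply: (order_unit_periodic_ge1 Hfu); [exact/inX_iter/Hh | lia |].
by rewrite -iterD addnC -Hab; congr iter; lia.
Qed.

Lemma order_unit_roof_sub : order_unit A (fun x => roof_l h l1 f x - roof_k h k1 f x).
Proof.
have Hlc := loc_const_op2 (fun a b => a - b) loc_const_roof_l loc_const_roof_k.
apply: order_unit_of_birkhoff_ge1 => //.
case: (loc_const_uniform Hlc) => m Hm; case: (loc_const_bounded Hlc) => E HE.
apply: (birkhoff_ge1_of_periodic (m := m.+1) (E := E)) => //.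
- by move=> y z Hy Hz Ha; apply: Hm => //; apply: agree_le Ha.
- by move=> y Hy; have := HE y Hy; lia.
- by move=> w p Hw Hp Hper; exact: roof_sub_periodic_ge1.
Qed.

End TransferOrderUnit.

Lemma contR_int (R : realType) N (A : 'M[int]_N) (u : sq N -> int) :
  loc_const A u -> contR A (fun x => (u x)%:~R : R).
Proof.
move=> Hu x Hx e He; case: (Hu x Hx) => m Hm.
by exists m => y Hy Ha; rewrite (Hm y Hy Ha) subrr normr0.
Qed.

Lemma contR_cst (R : realType) N (A : 'M[int]_N) (c : R) : contR A (fun _ => c).
Proof. by move=> x Hx e He; exists 0%N => y _ _; rewrite subrr normr0. Qed.

Lemma susp_eq_birkhoff (R : realType) M (B : 'M[int]_M) (f : sq M -> int) :
  (forall y, inX B y -> 0 <= f y) ->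
  forall n y (r : R), inX B y -> (birkhoff f n y)%:~R <= r ->
  susp_eq B (fun y => (f y)%:~R : R) (fun _ => 0) (fun _ => 0)
    (y, r) (iter n (@shift M) y, r - (birkhoff f n y)%:~R).
Proof.
move=> Hf0; elim=> [|n IH] y r Hy Hr; first by rewrite birkhoff0 subr0; apply: rst_refl.
have Hfn : 0 <= f (iter n (@shift M) y) by apply/Hf0/inX_iter.
have HS := birkhoffS f n y.
have Hle : (birkhoff f n y)%:~R <= r by apply: le_trans Hr; rewrite ler_int HS lerDl.
apply: rst_trans (IH y r Hy Hle) (rst_step _ _ _ _ _); split => /=.
- by split => /=; [exact: inX_iter | rewrite subr_ge0].
- by rewrite lerBrDl -intrD -HS.
- by rewrite HS intrD subr0 opprD addrA.
Qed.

Section SuspensionMap.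
Variables (R : realType) (N M : nat) (A : 'M[int]_N) (B : 'M[int]_M).
Variables (h : sq N -> sq M) (k1 l1 : sq N -> nat) (f : sq M -> int).
Hypotheses (Hh : forall x, inX A x -> inX B (h x)) (Hch : cont_map A h).
Hypothesis hrel : forall x, inX A x ->
  iter (k1 x) (@shift M) (h (shift x)) = iter (l1 x) (@shift M) (h x).
Hypothesis Hf0 : forall y, inX B y -> 0 <= f y.

Lemma roof_ge0 x : inX A x -> 0 <= roof_l h l1 f x /\ 0 <= roof_k h k1 f x.
Proof.
by move=> Hx; split; apply: (birkhoff_ge0 (A := B)) => //; [apply: Hh | apply/Hh/inX_shift].
Qed.

Lemma flow_map_roof :
  flow_map A B (fun x => (roof_l h l1 f x)%:~R) (fun x => (roof_k h k1 f x)%:~R) (fun _ => 0)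
    (fun y => (f y)%:~R) (fun _ => 0) (fun _ => 0) h (fun p : pt R N => (h p.1, p.2)).
Proof.
split => /=.
- by move=> [x r] [Hx Hr]; split => //; exact: Hh.
- move=> p q _ _; elim => [[x r] _ [[Hx _] Hl ->]| p0 | p0 q0 _ | p0 q0 r0 _ H1 _ H2] /=.
  + set lf : R := (roof_l h l1 f x)%:~R; set kf : R := (roof_k h k1 f x)%:~R.
    have Hk : kf <= r - (lf - kf) by rewrite /= in Hl; lra.
    have H2 := susp_eq_birkhoff Hf0 (Hh (inX_shift Hx)) Hk.
    rewrite hrel // -/kf (_ : r - (lf - kf) - kf = r - lf) in H2; last by ring.
    exact: rst_trans (susp_eq_birkhoff Hf0 (Hh Hx) Hl) (rst_sym _ _ _ _ H2).
  + exact: rst_refl.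
  + exact: rst_sym.
  + exact: rst_trans H1 H2.
- move=> U HU _ [x r] [Hx Hr] HUp.
  case: (HU (h x, r) (conj (Hh Hx) Hr) HUp) => m [e He Hm].
  case: (Hch Hx m) => n Hn.
  exists n, e => // [[y s]] [Hy Hs] Ha Hd.
  by apply: Hm => //=; [split => //; exact: Hh | exact: Hn].
- by move=> p t _ _; apply: rst_refl.
- by move=> x _; apply: rst_refl.
Qed.

End SuspensionMap.

Lemma coe_suspension_map (R : realType) N M (A : 'M[int]_N) (B : 'M[int]_M)
  (HA01 : zero_one_mx A) (HAirr : irreducible_mx A) (HAperm : ~ is_perm_matrix A)
  (h : sq N -> sq M) (hinv : sq M -> sq N) (k1 l1 : sq N -> nat)
  (Hh : forall x, inX A x -> inX B (h x)) (Hhh : forall x, inX A x -> hinv (h x) = x)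
  (Hch : cont_map A h) (Hchi : cont_map B hinv)
  (Hk1 : loc_const A k1) (Hl1 : loc_const A l1)
  (hrel : forall x, inX A x ->
     iter (k1 x) (@shift M) (h (shift x)) = iter (l1 x) (@shift M) (h x))
  (f : sq M -> int) (Hfc : loc_const B f) (Hf0 : forall y, inX B y -> 0 <= f y)
  (Hfu : order_unit B f) :
  exists lf kf : sq N -> int,
    [/\ loc_const A lf /\ loc_const A kf /\
          (forall x, inX A x -> 0 <= lf x /\ 0 <= kf x),
        susp_triplet A (fun x => (lf x)%:~R : R) (fun x => (kf x)%:~R) (fun _ => 0) &
        exists Phi : pt R N -> pt R M,
          flow_map A B (fun x => (lf x)%:~R) (fun x => (kf x)%:~R) (fun _ => 0)
                       (fun y => (f y)%:~R) (fun _ => 0) (fun _ => 0) h Phi].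
Proof.
have Llf := loc_const_roof_l Hh Hch Hl1 Hfc.
have Lkf := loc_const_roof_k Hh Hch Hk1 Hfc.
have Hpos := roof_ge0 k1 l1 Hh Hf0.
exists (roof_l h l1 f), (roof_k h k1 f); split => //; last first.
  by exists (fun p => (h p.1, p.2)); exact: flow_map_roof.
split.
- by split; [exact: contR_int | split; [exact: contR_int | exact: contR_cst]].
- by move=> x Hx; case: (Hpos x Hx) => H1 H2; rewrite !ler0z.
- exists (fun x => roof_l h l1 f x - roof_k h k1 f x); split.
  + exact (loc_const_op2 (fun a b : int => a - b) Llf Lkf).
  + by move=> x Hx; rewrite intrB.
  + exact: (order_unit_roof_sub HA01 HAirr HAperm Hh Hhh Hch Hchi Hk1 Hl1 hrel Hfc Hfu).
- move=> x Hx; case: (Hpos x Hx) => H1 H2.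
  by split; [exists `|roof_l h l1 f x|%N | exists `|roof_k h k1 f x|%N];
    rewrite subr0 -[_%:R]/((_ %:Z)%:~R) gez0_abs.
Qed.

Unset Implicit Arguments. Set Strict Implicit.

Theorem proposition3p6 (R : realType) (N M : nat)
    (A : 'M[int]_N) (B : 'M[int]_M)
    (hN : (1 < N)%N) (hM : (1 < M)%N)
    (hA01 : zero_one_mx A) (hB01 : zero_one_mx B)
    (hAirr : irreducible_mx A) (hBirr : irreducible_mx B)
    (hAperm : ~ is_perm_matrix A) (hBperm : ~ is_perm_matrix B)
    (h : sq N -> sq M) (hinv : sq M -> sq N)
    (hcoe : coe A B h hinv)
    (f : sq M -> int) (g : sq N -> int)
    (hfc : loc_const B f) (hf0 : forall y, inX B y -> 0 <= f y)
    (hfu : order_unit B f)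
    (hgc : loc_const A g) (hg0 : forall x, inX A x -> 0 <= g x)
    (hgu : order_unit A g) :
  exists (lf kf : sq N -> int) (lg kg : sq M -> int),
    [/\ loc_const A lf /\ loc_const A kf /\
          (forall x, inX A x -> 0 <= lf x /\ 0 <= kf x),
        loc_const B lg /\ loc_const B kg /\
          (forall y, inX B y -> 0 <= lg y /\ 0 <= kg y),
        susp_triplet A (fun x => (lf x)%:~R : R) (fun x => (kf x)%:~R) (fun _ => 0),
        susp_triplet B (fun y => (lg y)%:~R : R) (fun y => (kg y)%:~R) (fun _ => 0) &
        (exists (Phif : pt R N -> pt R M) (Phig : pt R M -> pt R N),
          flow_map A B (fun x => (lf x)%:~R) (fun x => (kf x)%:~R) (fun _ => 0)
                       (fun y => (f y)%:~R) (fun _ => 0) (fun _ => 0) h Phif /\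
          flow_map B A (fun y => (lg y)%:~R) (fun y => (kg y)%:~R) (fun _ => 0)
                       (fun x => (g x)%:~R) (fun _ => 0) (fun _ => 0) hinv Phig)].
Proof.
case: hcoe => [[Hh Hhi] Hhh [Hhh' [Ch Chi]] [k1 [l1 [Hk1 [Hl1 Hr1]]]] [k2 [l2 [Hk2 [Hl2 Hr2]]]]].
have [lf [kf [Hlkf Htf [Phif HPf]]]] :=
  coe_suspension_map R hA01 hAirr hAperm Hh Hhh Ch Chi Hk1 Hl1 Hr1 hfc hf0 hfu.
have [lg [kg [Hlkg Htg [Phig HPg]]]] :=
  coe_suspension_map R hB01 hBirr hBperm Hhi Hhh' Chi Ch Hk2 Hl2 Hr2 hgc hg0 hgu.
by exists lf, kf, lg, kg; split => //; exists Phif, Phig.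
Qed.
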